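(* For any $\alpha,\beta\in\mathbb N$, $n\in\mathbb Z$ and $\epsilon\in\{0,1\}$: $M_{\alpha,n}M_{\beta,n+\epsilon}=\mathfrak q^{\min(\alpha,\beta)\epsilon}M_{\beta,n+\epsilon}M_{\alpha,n}$ in $U^>_q(L\mathfrak{sl}_2)$.
   Context: Let $q$ be a formal variable and $\mathfrak q=q^2$. $U^>_q(L\mathfrak{sl}_2)$ is the $\mathbb C(q)$-algebra generated by $e_r$ ($r\in\mathbb Z$) subject to $(z-q^2w)e(z)e(w)=(q^2z-w)e(w)e(z)$, $e(z)=\sum_re_rz^{-r}$. Set $M_{0,n}=1$, $M_{1,n}=e_{-n}$ and, for $k\ge1$, $M_{k,n}=\frac{(-1)^{k(k-1)/2}}{(1-\mathfrak q)^{k-1}}Y_k$ where $Y_1=M_{1,n-k+1}$, $Y_j=[Y_{j-1},M_{1,n-k+2j-1}]_{\mathfrak q^j}$ ($2\le j\le k$), $[x,y]_c=xy-c\,yx$. *)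

From HB Require Import structures.
From mathcomp Require Import all_boot all_order all_algebra.
From mathcomp Require Import complex.
From mathcomp Require Import reals.
Set Implicit Arguments. Unset Strict Implicit. Unset Printing Implicit Defensive.
Import Order.TTheory GRing.Theory Num.Theory.
Local Open Scope ring_scope.

Definition Cq (R : realType) : fieldType := {fraction {poly R[i]}}.

Definition qv (R : realType) : Cq R := tofrac ('X : {poly R[i]}).

Definition qq (R : realType) : Cq R := qv R ^+ 2.

(* The series relation (z - q^2 w) e(z) e(w) = (q^2 z - w) e(w) e(z),
   with e(z) = \sum_r e_r z^{-r}, is equivalent (coefficient of
   z^{-a} w^{-b}) to
     e_{a+1} e_b - q^2 e_a e_{b+1} = q^2 e_b e_{a+1} - e_{b+1} e_a
   for all a, b in Z. *)
Definition sl2_rel (R : realType) (A : algType (Cq R)) (e : int -> A) : Prop :=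
  forall a b : int,
    e (a + 1) * e b - qq R *: (e a * e (b + 1))
    = qq R *: (e b * e (a + 1)) - e (b + 1) * e a.

Definition qcomm (R : realType) (A : algType (Cq R)) (c : Cq R) (x y : A) : A :=
  x * y - c *: (y * x).

(* Y_j for given k, n:  Y_1 = e_{-(n-k+1)},
   Y_j = [Y_{j-1}, M_{1, n-k+2j-1}]_{qq^j},  M_{1,m} = e_{-m}. *)
Fixpoint Yseq (R : realType) (A : algType (Cq R)) (e : int -> A)
  (k : nat) (n : int) (j : nat) : A :=
  match j with
  | 0 => 0 (* unused *)
  | 1 => e (- (n - k%:Z + 1))
  | j'.+1 => qcomm (qq R ^+ j'.+1) (Yseq e k n j')
                   (e (- (n - k%:Z + 2 * (j'.+1)%:Z - 1)))
  end.

Definition Mkn (R : realType) (A : algType (Cq R)) (e : int -> A)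
  (k : nat) (n : int) : A :=
  if k is 0 then 1
  else ((-1) ^+ (k * (k - 1) %/ 2) / (1 - qq R) ^+ (k - 1)) *: Yseq e k n k.

From mathcomp Require Import all_boot all_order all_algebra.
From mathcomp Require Import complex reals ring zify.
Import Order.TTheory GRing.Theory Num.Theory.
Local Open Scope ring_scope.
Set Implicit Arguments. Unset Strict Implicit. Unset Printing Implicit Defensive.

(* Write f m := e_{-m} and let q stand for \mathfrak q. Up to a nonzero scalar,
   M_{k+1,n} is the left-nested q-commutator [qchain k n] of the generators
   f (n - k), f (n - k + 2), ..., f (n + k), and the defining relation reads
   [f c, f d]_q = - [f (d - 1), f (c + 1)]_q.  By induction on k, [qchain k c]
   q-commutes with every f m, |m - c| <= k + 1, with factor q^(m - c): the
   relation trades a generator at the edge of the range for a q-commutator of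
   generators strictly inside it, and the induction also shows that the chain
   may be bracketed from the right instead.  If alpha <= beta, every factor of
   the chain of M_{alpha,n} lies in the range of the chain of M_{beta,n+eps},
   so the factors multiply to q^(alpha eps); symmetrically if beta < alpha. *)

Section SkewCommutation.

Variables (F : fieldType) (A : algType F).

Definition qcommutator (c : F) (x y : A) : A := x * y - c *: (y * x).

Lemma qcommutatorA (a b : F) (h B g : A) :
  GRing.comm B (a *: (h * g) - b *: (g * h)) ->
  qcommutator b (qcommutator a h B) g = qcommutator b h (qcommutator a B g).
Proof.
rewrite /GRing.comm /qcommutator.
rewrite !mulrBl !mulrBr -!scalerAl -!scalerAr !scalerBr !scalerA !mulrA => /eqP.
rewrite subr_eq addrAC eq_sym subr_eq => /eqP BX.
by rewrite -!addrA -!opprD !addrA BX.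
Qed.

Variable t : F.

Definition skew_comm (z : int) (x y : A) : Prop := x * y = t ^ z *: (y * x).

Lemma skew_comm0r z (x : A) : skew_comm z x 0.
Proof. by rewrite /skew_comm mulr0 mul0r scaler0. Qed.

Lemma skew_commZl z a (x y : A) : skew_comm z x y -> skew_comm z (a *: x) y.
Proof. by rewrite /skew_comm -scalerAl -scalerAr => ->; rewrite !scalerA mulrC. Qed.

Lemma skew_commZr z a (x y : A) : skew_comm z x y -> skew_comm z x (a *: y).
Proof. by rewrite /skew_comm -scalerAl -scalerAr => ->; rewrite !scalerA mulrC. Qed.

Lemma skew_commBr z (x y1 y2 : A) :
  skew_comm z x y1 -> skew_comm z x y2 -> skew_comm z x (y1 - y2).
Proof. by rewrite /skew_comm mulrBr mulrBl scalerBr => -> ->. Qed.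

Hypothesis t_neq0 : t != 0.

Lemma skew_commC z (x y : A) : skew_comm z x y -> skew_comm (- z) y x.
Proof.
rewrite /skew_comm => ->.
by rewrite scalerA -invr_expz mulVf ?scale1r // expfz_neq0.
Qed.

Lemma skew_commMr z1 z2 (x y1 y2 : A) :
  skew_comm z1 x y1 -> skew_comm z2 x y2 -> skew_comm (z1 + z2) x (y1 * y2).
Proof.
rewrite /skew_comm => xy1 xy2.
by rewrite mulrA xy1 -scalerAl -[y1 * x * y2]mulrA xy2 -scalerAr mulrA scalerA expfzDr.
Qed.

Lemma skew_comm_qcommutatorr c z1 z2 (x y1 y2 : A) :
  skew_comm z1 x y1 -> skew_comm z2 x y2 ->
  skew_comm (z1 + z2) x (qcommutator c y1 y2).
Proof.
move=> xy1 xy2; apply: skew_commBr; first exact: skew_commMr.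
by apply: skew_commZr; rewrite addrC; apply: skew_commMr.
Qed.

Lemma skew_comm_qcommutator_defectr (K : nat) (r : int) (a g y X : A) :
  skew_comm (r + 1) a y -> qcommutator t y g = - X ->
  skew_comm (K%:Z + r + 1) a X -> skew_comm r (qcommutator (t ^+ K) a g) y.
Proof.
rewrite /skew_comm /qcommutator => ay yg aX.
have ya : y * a = t ^ (- (r + 1)) *: (a * y).
  by rewrite ay scalerA -invr_expz mulVf ?scale1r // expfz_neq0.
have {}yg : y * g = t *: (g * y) - X by rewrite -yg addrC subrK.
rewrite mulrBl -scalerAl -[g * a * y]mulrA ay -scalerAr scalerA mulrA.
rewrite mulrBr -scalerAr scalerBr scalerA [y * (g * a)]mulrA [y * (a * g)]mulrA.
rewrite ya -scalerAl -[a * y * g]mulrA !yg.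
rewrite mulrBl mulrBr -scalerAl -scalerAr aX !scalerBr !scalerA.
have e1 : t ^ r * t ^ (- (r + 1)) * t = 1.
  by rewrite -expfzDr // -[X in _ * X]expr1z -expfzDr // -(expr0z t); congr (_ ^ _); ring.
have e2 : t ^ r * t ^ (- (r + 1)) * t ^ (K%:Z + r + 1) = t ^ r * t ^+ K.
  by rewrite -!expfzDr // exprnP -expfzDr //; congr (_ ^ _); ring.
have e3 : t ^ r * t ^+ K * t = t ^+ K * t ^ (r + 1).
  by rewrite exprnP -!expfzDr // -[X in _ * X]expr1z -expfzDr //; congr (_ ^ _); ring.
by rewrite e1 e2 e3 scale1r mulrA opprB addrA subrK.
Qed.

Lemma skew_comm_qcommutator_defectl (K : nat) (r : int) (h B y X : A) :
  skew_comm (r - 1) B y -> qcommutator t h y = - X ->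
  skew_comm (r - 1 - K%:Z) B X -> skew_comm r (qcommutator (t ^+ K) h B) y.
Proof.
rewrite /skew_comm /qcommutator => By hy BX.
have {}hy : h * y = t *: (y * h) - X by rewrite -hy addrC subrK.
rewrite mulrBl -scalerAl -[h * B * y]mulrA -[B * h * y]mulrA By hy.
rewrite -scalerAr mulrA hy mulrBr -scalerAr BX mulrBl -scalerAl.
rewrite [B * (y * h)]mulrA By -scalerAl mulrBr -scalerAr.
rewrite !scalerBr !scalerA !mulrA.
have e1 : t ^ (r - 1) * t = t ^ r.
  by rewrite -[X in _ * X]expr1z -expfzDr // subrK.
have e2 : t ^+ K * t * t ^ (r - 1) = t ^ r * t ^+ K.
  by rewrite exprnP -[X in _ * X * _]expr1z -!expfzDr //; congr (_ ^ _); ring.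
have e3 : t ^+ K * t ^ (r - 1 - K%:Z) = t ^ (r - 1).
  by rewrite exprnP -!expfzDr //; congr (_ ^ _); ring.
by rewrite e1 e2 e3 opprB addrA subrK.
Qed.

End SkewCommutation.

Section QChain.

Variables (F : fieldType) (A : algType F) (t : F) (f : int -> A).

(* [qchain j c] has the j + 1 factors f (c - j), f (c - j + 2), ..., f (c + j). *)
Fixpoint qchain (j : nat) (c : int) : A :=
  if j is j'.+1 then qcommutator (t ^+ j.+1) (qchain j' (c - 1)) (f (c + j%:Z))
  else f c.

Lemma qchainS j c :
  qchain j.+1 c = qcommutator (t ^+ j.+2) (qchain j (c - 1)) (f (c + j.+1%:Z)).
Proof. by []. Qed.

Hypothesis t_neq0 : t != 0.
Hypothesis two_neq0 : 2 != 0 :> F.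
Hypothesis f_rel : forall c d,
  qcommutator t (f c) (f d) = - qcommutator t (f (d - 1)) (f (c + 1)).

Lemma skew_comm_succ c : skew_comm t 1 (f c) (f (c + 1)).
Proof.
have := f_rel c (c + 1); rewrite addrK; set x := qcommutator _ _ _ => x_opp.
have : 2 *: x == 0 by rewrite scaler_nat mulr2n {2}x_opp subrr.
by rewrite scaler_eq0 (negPf two_neq0) /x /qcommutator subr_eq0 /skew_comm expr1z => /eqP.
Qed.

Lemma qchain_skew_comm_f_step j :
  (forall c m, c - j.+1%:Z <= m <= c + j.+1%:Z ->
     skew_comm t (m - c) (qchain j c) (f m)) ->
  (forall c, qchain j.+1 c = qcommutator (t ^+ j.+2) (f (c - j.+1%:Z)) (qchain j (c + 1))) ->
  forall c m, c - j.+2%:Z <= m <= c + j.+2%:Z ->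
    skew_comm t (m - c) (qchain j.+1 c) (f m).
Proof.
move=> chain_f chain_recl c m /andP [lo hi].
have [mle|mge] : m <= c + j%:Z \/ c + j.+1%:Z <= m by lia.
- rewrite qchainS.
  apply: (skew_comm_qcommutator_defectr t_neq0
           (X := qcommutator t (f (c + j%:Z)) (f (m + 1)))) => //.
  + by rewrite (_ : m - c + 1 = m - (c - 1)); [apply: chain_f; lia | ring].
  + by rewrite f_rel (_ : c + j.+1%:Z - 1 = c + j%:Z); last lia.
  + have [->|mlt] : m = c + j%:Z \/ m <= c + j%:Z - 1 by lia.
      by rewrite /qcommutator skew_comm_succ expr1z subrr; apply: skew_comm0r.
    rewrite (_ : _ + _ + 1 = (c + j%:Z - (c - 1)) + (m + 1 - (c - 1))); last lia.
    by apply: skew_comm_qcommutatorr => //; apply: chain_f; lia.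
- rewrite chain_recl.
  apply: (skew_comm_qcommutator_defectl t_neq0
           (X := qcommutator t (f (m - 1)) (f (c - j.+1%:Z + 1)))) => //.
  + by rewrite (_ : m - c - 1 = m - (c + 1)); [apply: chain_f; lia | ring].
  + rewrite (_ : _ - _ - _ = (m - 1 - (c + 1)) + (c - j.+1%:Z + 1 - (c + 1))); last lia.
    by apply: skew_comm_qcommutatorr => //; apply: chain_f; lia.
Qed.

Lemma qchain_recl_step j :
  (forall c m, c - j.+1%:Z <= m <= c + j.+1%:Z ->
     skew_comm t (m - c) (qchain j c) (f m)) ->
  (forall c, qchain j.+1 c = qcommutator (t ^+ j.+2) (f (c - j.+1%:Z)) (qchain j (c + 1))) ->
  forall c, qchain j.+2 c = qcommutator (t ^+ j.+3) (f (c - j.+2%:Z)) (qchain j.+1 (c + 1)).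
Proof.
move=> chain_f chain_recl c.
rewrite [qchain j.+2 c]qchainS (chain_recl (c - 1)) [qchain j.+1 (c + 1)]qchainS.
rewrite (_ : c - 1 - j.+1%:Z = c - j.+2%:Z); last lia.
rewrite (_ : c + 1 + j.+1%:Z = c + j.+2%:Z); last lia.
rewrite !addrK; apply: qcommutatorA.
(* [f_rel] trades f (c - j.+2), f (c + j.+2) for f (c + j.+1), f (c - j.+1),
   whose exponents against [qchain j c] cancel. *)
have -> : t ^+ j.+2 *: (f (c - j.+2%:Z) * f (c + j.+2%:Z))
          - t ^+ j.+3 *: (f (c + j.+2%:Z) * f (c - j.+2%:Z))
    = - t ^+ j.+2 *: qcommutator t (f (c + j.+1%:Z)) (f (c - j.+1%:Z)).
  rewrite [t ^+ j.+3]exprSr -scalerA -scalerBr -/(qcommutator t _ _) f_rel scaleNr scalerN.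
  rewrite (_ : c + j.+2%:Z - 1 = c + j.+1%:Z); last lia.
  by rewrite (_ : c - j.+2%:Z + 1 = c - j.+1%:Z); last lia.
have : skew_comm t 0 (qchain j c)
         (- t ^+ j.+2 *: qcommutator t (f (c + j.+1%:Z)) (f (c - j.+1%:Z))).
  apply: skew_commZr.
  rewrite (_ : 0 = (c + j.+1%:Z - c) + (c - j.+1%:Z - c)); last lia.
  by apply: skew_comm_qcommutatorr => //; apply: chain_f; lia.
by rewrite /skew_comm expr0z scale1r.
Qed.

Lemma qchain_skew_comm_f j c m :
  c - j.+1%:Z <= m <= c + j.+1%:Z -> skew_comm t (m - c) (qchain j c) (f m).
Proof.
suff [chain_f _] : (forall c m, c - j.+1%:Z <= m <= c + j.+1%:Z ->
                 skew_comm t (m - c) (qchain j c) (f m)) /\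
              (forall c, qchain j.+1 c =
                 qcommutator (t ^+ j.+2) (f (c - j.+1%:Z)) (qchain j (c + 1))).
  exact: chain_f.
elim: j {c m} => [|j [chain_f chain_recl]]; last first.
  by split; [apply: qchain_skew_comm_f_step | apply: qchain_recl_step].
split=> // c m range.
have [->|[->|->]] : m = c - 1 \/ m = c \/ m = c + 1 by lia.
- rewrite (_ : c - 1 - c = - 1); last ring.
  by apply: skew_commC => //; have := skew_comm_succ (c - 1); rewrite subrK.
- by rewrite /skew_comm subrr expr0z scale1r.
- by rewrite addrAC subrr add0r; apply: skew_comm_succ.
Qed.

Lemma skew_comm_qchain (x : A) (d : int) j c :
  (forall m, c - j%:Z <= m <= c + j%:Z -> skew_comm t (m - d) x (f m)) ->
  skew_comm t (j.+1%:Z * (c - d)) x (qchain j c).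
Proof.
elim: j c => [|j IH] c xf; first by rewrite mul1r; apply: xf; lia.
rewrite qchainS (_ : _ * _ = j.+1%:Z * (c - 1 - d) + (c + j.+1%:Z - d)); last first.
  by rewrite [j.+2%:Z]intS [j.+1%:Z]intS; ring.
by apply: skew_comm_qcommutatorr => //; [apply: IH => m range; apply: xf | apply: xf]; lia.
Qed.

Lemma qchain_skew_comm j k c d :
  c - k.+1%:Z <= d - j%:Z -> d + j%:Z <= c + k.+1%:Z ->
  skew_comm t (j.+1%:Z * (d - c)) (qchain k c) (qchain j d).
Proof.
move=> lo hi; apply: skew_comm_qchain => m range.
by apply: qchain_skew_comm_f; lia.
Qed.

End QChain.

Lemma qq_neq0 (R : realType) : qq R != 0.
Proof. by rewrite /qq expf_neq0 // /qv tofrac_eq0 polyX_eq0. Qed.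

Lemma Cq_two_neq0 (R : realType) : 2 != 0 :> Cq R.
Proof.
by rewrite -(rmorph_nat (@tofrac _)) tofrac_eq0 -polyC_natr polyC_eq0 pnatr_eq0.
Qed.

Section Sl2Relations.

Variables (R : realType) (A : algType (Cq R)) (e : int -> A).

Lemma sl2_rel_qcommutator : sl2_rel e ->
  forall a b, qcommutator (qq R) (e (a + 1)) (e b) = - qcommutator (qq R) (e (b + 1)) (e a).
Proof.
move=> rel a b; move: (rel a b); rewrite /qcommutator.
move: (e (a + 1) * e b) (qq R *: (e a * e (b + 1))) => P Q.
move: (qq R *: (e b * e (a + 1))) (e (b + 1) * e a) => S T h.
by rewrite opprB; apply/eqP; rewrite subr_eq -addrA [- T + S]addrC -h addrC subrK.
Qed.

Lemma sl2_rel_qcommutator_opp : sl2_rel e -> forall c d,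
  qcommutator (qq R) (e (- c)) (e (- d))
  = - qcommutator (qq R) (e (- (d - 1))) (e (- (c + 1))).
Proof.
move=> rel c d; have := sl2_rel_qcommutator rel (- c - 1) (- d).
by rewrite subrK => ->; rewrite !opprD opprK.
Qed.

Lemma Yseq_qchain k n j :
  Yseq e k n j.+1 = qchain (qq R) (fun m => e (- m)) j (n - k%:Z + j.+1%:Z).
Proof.
elim: j => [|j IH] //.
rewrite [Yseq _ _ _ _]/= -/(Yseq e k n j.+1) IH qchainS.
rewrite (_ : n - k%:Z + j.+2%:Z - 1 = n - k%:Z + j.+1%:Z); last lia.
by rewrite (_ : n - k%:Z + 2 * j.+2%:Z - 1 = n - k%:Z + j.+2%:Z + j.+1%:Z); last lia.
Qed.

Lemma Mkn_qchain k n :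
  Mkn e k.+1 n
  = ((-1) ^+ (k.+1 * k %/ 2) / (1 - qq R) ^+ k) *: qchain (qq R) (fun m => e (- m)) k n.
Proof. by rewrite /Mkn Yseq_qchain subrK subn1. Qed.

End Sl2Relations.

Theorem proposition6p5 (R : realType) (A : algType (Cq R)) (e : int -> A) :
  sl2_rel e ->
  forall (alpha beta : nat) (n : int) (eps : nat), (eps <= 1)%N ->
    Mkn e alpha n * Mkn e beta (n + eps%:Z)
    = (qq R ^+ (minn alpha beta * eps)) *: (Mkn e beta (n + eps%:Z) * Mkn e alpha n).
Proof.
move=> rel [|a] [|b] n eps eps_le1;
  try by rewrite /Mkn ?min0n ?minn0 mul0n expr0 scale1r ?mul1r ?mulr1.
have chain_comm := qchain_skew_comm (qq_neq0 R) (Cq_two_neq0 R) (sl2_rel_qcommutator_opp rel).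
rewrite !Mkn_qchain [qq R ^+ _]exprnP; apply/skew_commZl/skew_commZr.
have [le_ab|lt_ba] := leqP a b.
- rewrite minnSS (minn_idPl le_ab) PoszM (_ : _ * _ = - (a.+1%:Z * (n - (n + eps%:Z)))); last ring.
  by apply: skew_commC; [exact: qq_neq0 | apply: chain_comm; lia].
- rewrite minnSS (minn_idPr (ltnW lt_ba)) PoszM (_ : _ * _ = b.+1%:Z * (n + eps%:Z - n)); last ring.
  by apply: chain_comm; lia.
Qed.
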